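(* Let $f$ be a bounded modulus function, $\beta\in(0,1]$, $m\ge0$ an integer, $\theta=(k_r)$ a lacunary sequence, and $p=(p_k)$ a sequence of positive reals with $0<h=\inf_kp_k\le p_k\le\sup_kp_k=H<\infty$. If $\lim_{r\to\infty}\frac{h_r}{h_r^\beta}=1$, then $S_\theta^\beta(F,\Delta^m)\subset w_p^\beta(\theta,f,F,\Delta^m)$.
   Context: A fuzzy number is a map $X:\mathbb{R}\to[0,1]$ which is normal, fuzzy convex, upper semicontinuous, with compact closure of $\{t:X(t)>0\}$; $L(\mathbb{R})$ is the set of fuzzy numbers. Level sets $[X]^\alpha=\{t:X(t)\ge\alpha\}$ ($\alpha\in(0,1]$), $[X]^0=\overline{\{t:X(t)>0\}}$, are compact intervals $[u^\alpha,v^\alpha]$. Subtraction: $[X-Y]^\alpha=[u_1^\alpha-v_2^\alpha,v_1^\alpha-u_2^\alpha]$. Metric: $d(X,Y)=\sup_{\alpha\in[0,1]}\max\{|u_1^\alpha-u_2^\alpha|,|v_1^\alpha-v_2^\alpha|\}$. $(\Delta^0X)_k=X_k$, $(\Delta^1X)_k=X_k-X_{k+1}$, $(\Delta^mX)_k=(\Delta^1(\Delta^{m-1}X))_k$. A lacunary sequence is an increasing integer sequence $\theta=(k_r)_{r\ge0}$ with $k_0=0$, $h_r=k_r-k_{r-1}\to\infty$; $I_r=(k_{r-1},k_r]$. A modulus function is $f:[0,\infty)\to[0,\infty)$ with $f(x)=0$ iff $x=0$, $f(x+y)\le f(x)+f(y)$, $f$ increasing, and $f$ right-continuous at $0$.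 $w_p^\beta(\theta,f,F,\Delta^m)$: sequences $X$ of fuzzy numbers with some $X_0\in L(\mathbb{R})$ such that $\lim_r\frac{1}{h_r^\beta}\sum_{k\in I_r}[f(d(\Delta^mX_k,X_0))]^{p_k}=0$. $S_\theta^\beta(F,\Delta^m)$: sequences $X$ with some $X_0\in L(\mathbb{R})$ such that for all $\varepsilon>0$, $\lim_r\frac{1}{h_r^\beta}|\{k\in I_r:d(\Delta^mX_k,X_0)\ge\varepsilon\}|=0$. *)

From HB Require Import structures.
From mathcomp Require Import all_boot all_order all_algebra.
From mathcomp Require Import all_classical all_reals all_analysis.
Set Implicit Arguments. Unset Strict Implicit. Unset Printing Implicit Defensive.
Import Order.TTheory GRing.Theory Num.Theory.
Import numFieldNormedType.Exports.
Local Open Scope classical_set_scope.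
Local Open Scope ring_scope.

Section FuzzyDefs.
Variable R : realType.

(* a fuzzy set on R is represented by its membership function *)
Definition fuzzy_number (X : R -> R) : Prop :=
  [/\ (forall t, 0 <= X t <= 1),
      (exists t, X t = 1),
      (forall s t l, 0 <= l <= 1 ->
          Num.min (X s) (X t) <= X (l * s + (1 - l) * t)),
      (forall t e, 0 < e -> \forall s \near t, X s < X t + e)
    & compact (closure [set t | 0 < X t])].

Definition levelset (X : R -> R) (a : R) : set R :=
  if a == 0 then closure [set t | 0 < X t] else [set t | a <= X t].

Definition lowerE (X : R -> R) (a : R) : R := inf (levelset X a).
Definition upperE (X : R -> R) (a : R) : R := sup (levelset X a).

(* subtraction: the fuzzy set whose alpha-level sets (alpha in (0,1]) are
   [u1^a - v2^a, v1^a - u2^a]; membership reconstructed from level sets. *)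
Definition fsub (X Y : R -> R) : R -> R := fun t =>
  sup ([set a | 0 < a <= 1 /\
         lowerE X a - upperE Y a <= t <= upperE X a - lowerE Y a] `|` [set 0]).

Definition fdist (X Y : R -> R) : R :=
  sup [set Num.max `|lowerE X a - lowerE Y a| `|upperE X a - upperE Y a|
        | a in [set a : R | 0 <= a <= 1]].

Fixpoint Delta (m : nat) (X : nat -> R -> R) : nat -> R -> R :=
  match m with
  | 0 => X
  | m'.+1 => fun k => fsub (Delta m' X k) (Delta m' X k.+1)
  end.

Definition modulus (f : R -> R) : Prop :=
  [/\ (forall x, 0 <= x -> 0 <= f x),
      (forall x, 0 <= x -> (f x = 0 <-> x = 0)),
      (forall x y, 0 <= x -> 0 <= y -> f (x + y) <= f x + f y),
      (forall x y, 0 <= x -> x <= y -> f x <= f y)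
    & f x @[x --> 0^'+] --> f 0].

Definition bounded_fun0 (f : R -> R) : Prop :=
  exists M : R, forall x, 0 <= x -> f x <= M.

Definition lacunary (th : nat -> nat) : Prop :=
  [/\ th 0 = 0%N, (forall r, (th r < th r.+1)%N)
    & ((th r - th r.-1)%N%:R : R) @[r --> \oo] --> +oo].

(* h_r = k_r - k_{r-1}  (meaningful for r >= 1) *)
Definition hr (th : nat -> nat) (r : nat) : R := ((th r - th r.-1)%N)%:R.

(* I_r = (k_{r-1}, k_r] *)
Definition Ir (th : nat -> nat) (r : nat) : seq nat :=
  index_iota (th r.-1).+1 (th r).+1.

Definition w_space (beta : R) (th : nat -> nat) (f : R -> R) (p : nat -> R)
  (m : nat) (X : nat -> R -> R) : Prop :=
  exists X0, fuzzy_number X0 /\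
    (hr th r `^ beta)^-1 *
      (\sum_(k <- Ir th r) f (fdist (Delta m X k) X0) `^ p k) @[r --> \oo] --> 0.

Definition S_space (beta : R) (th : nat -> nat) (m : nat)
  (X : nat -> R -> R) : Prop :=
  exists X0, fuzzy_number X0 /\
    forall e : R, 0 < e ->
      (hr th r `^ beta)^-1 *
        (count (fun k => e <= fdist (Delta m X k) X0) (Ir th r))%:R
        @[r --> \oo] --> 0.

End FuzzyDefs.
Arguments hr {R}.
Arguments Ir : clear implicits.
Arguments w_space {R}.
Arguments S_space {R}.
Arguments lacunary {R}.
Arguments modulus {R}.
Arguments bounded_fun0 {R}.
Arguments fuzzy_number {R}.

From HB Require Import structures.
From mathcomp Require Import all_boot all_order all_algebra.
From mathcomp Require Import all_classical all_reals all_analysis.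
From mathcomp Require Import ring lra.
Set Implicit Arguments. Unset Strict Implicit. Unset Printing Implicit Defensive.
Import Order.TTheory GRing.Theory Num.Theory.
Import numFieldNormedType.Exports.
Local Open Scope classical_set_scope.
Local Open Scope ring_scope.

(* Split each block I_r according to whether d(Delta^m X_k, X0) < eps.  On the
   small terms f(d_k)^(p_k) <= f(eps)^h because f(eps) <= 1 and p_k >= h; on the
   others f(d_k)^(p_k) <= max(1, sup f)^H.  Hence the normalized block sum is at
   most f(eps)^h * h_r / h_r^beta plus a constant times the normalized count of
   large terms, which tends to 0 by statistical convergence.  Since
   h_r / h_r^beta -> 1 and f(eps) -> 0 as eps -> 0, the sum tends to 0. *)

Lemma fdist_ge0 (R : realType) (X Y : R -> R) : 0 <= fdist X Y.
Proof.
rewrite /fdist; set E := [set _ | _ in _].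
have [supE|] := pselect (has_sup E); last by move=> ?; rewrite sup_out.
apply: le_trans (sup_upper_bound supE _); last by exists 0; rewrite /= ?lexx ?ler01.
by rewrite le_max normr_ge0.
Qed.

Lemma size_Ir (R : realType) (th : nat -> nat) (r : nat) :
  (size (Ir th r))%:R = hr (R := R) th r.
Proof. by rewrite /Ir /index_iota size_iota subSS. Qed.

Lemma sum_le_size_count (R : numDomainType) (s : seq nat) (F : nat -> R)
    (P : pred nat) (c K : R) :
  (forall k, F k <= c + K * (P k)%:R) ->
  \sum_(k <- s) F k <= c * (size s)%:R + K * (count P s)%:R.
Proof.
move=> leF; elim: s => [|a s IHs]; first by rewrite big_nil !mulr0 addr0.
rewrite big_cons /= -addn1 !natrD; apply: (le_trans (lerD (leF a) IHs)).
by rewrite le_eqVlt; apply/orP; left; apply/eqP; ring.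
Qed.

Lemma cvg0_eps_squeeze (R : realType) (T : Type) (F : set_system T)
    {FF : Filter F} (u v : T -> R) (l : R) :
  v x @[x --> F] --> l ->
  (forall e, 0 < e -> exists w : T -> R, w x @[x --> F] --> 0 /\
     \forall x \near F, 0 <= u x <= e * v x + w x) ->
  u x @[x --> F] --> 0.
Proof.
move=> v_l u_le; apply/cvgr0Pnorm_lt => eta eta0.
set L := `|l| + 1.
have L0 : 0 < L by rewrite ltr_pwDr ?normr_ge0.
have [|w [w0 ule]] := u_le (eta / (2 * L)); first by rewrite divr_gt0 ?mulr_gt0.
near=> x.
have /andP[u0 uv] : 0 <= u x <= eta / (2 * L) * v x + w x by near: x.
have vL : v x < L by near: x; apply: cvgr_lt v_l _ _; rewrite ltr_pwDr ?ler_norm.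
have wx : `|w x| < eta / 2 by near: x; apply: cvgr_norm_lt w0 _ _; rewrite normr0 divr_gt0.
have evL : eta / (2 * L) * v x <= eta / 2.
  have -> : eta / 2 = eta / (2 * L) * L by field; rewrite gt_eqF.
  by rewrite ler_wpM2l ?divr_ge0 ?mulr_ge0 ?(ltW eta0) ?(ltW L0) ?ltW.
rewrite ger0_norm //; have := ler_norm (w x); lra.
Unshelve. all: by end_near.
Qed.

Lemma modulus_powR_small (R : realType) (f : R -> R) (h : R) : modulus f ->
  0 < h -> forall e, 0 < e -> exists eps, [/\ 0 < eps, f eps <= 1 & f eps `^ h <= e].
Proof.
move=> [f_ge0 f_eq0 _ _ f_cont] h0 e e0.
have f00 : f 0 = 0 by apply/(f_eq0 0 (lexx _)).
set delta := Num.min 1 (e `^ h^-1).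
have delta0 : 0 < delta by rewrite lt_min ltr01 powR_gt0.
have : \forall x \near 0^'+, 0 < x /\ `|f 0 - f x| < delta.
  near=> x; split; first by near: x; exact: nbhs_right_gt.
  by near: x; move/cvgrPdist_lt: f_cont; apply.
case/filter_ex => eps [eps0]; rewrite f00 sub0r normrN.
have fe0 : 0 <= f eps by apply: f_ge0; exact: ltW.
rewrite ger0_norm // lt_min => /andP[fe1 fe_root].
exists eps; split=> //; first exact: ltW.
have -> : e = (e `^ h^-1) `^ h by rewrite -powRrM mulVf ?gt_eqF // powRr1 // ltW.
by rewrite ge0_ler_powR ?nnegrE ?powR_ge0 // ltW.
Unshelve. all: by end_near.
Qed.

Section BoundedPowers.
Variables (R : realType) (f : R -> R) (M h H : R) (p : nat -> R).
Hypothesis f_ge0 : forall x, 0 <= x -> 0 <= f x.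
Hypothesis f_nondecreasing : forall x y, 0 <= x -> x <= y -> f x <= f y.
Hypothesis f_le_M : forall x, 0 <= x -> f x <= M.
Hypothesis h_gt0 : 0 < h.
Hypothesis p_bounds : forall k, h <= p k <= H.

Let K := Num.max 1 M `^ H.

Lemma powRf_le_max (x : R) (k : nat) : 0 <= x -> f x `^ p k <= K.
Proof.
move=> x0; have [hp pH] := andP (p_bounds k).
have p0 : 0 <= p k by rewrite (le_trans _ hp) ?ltW.
have max1 : 1 <= Num.max 1 M by rewrite le_max lexx.
have fx_max : f x <= Num.max 1 M by rewrite (le_trans (f_le_M x0)) // le_max lexx orbT.
apply: (@le_trans _ _ (Num.max 1 M `^ p k)); last exact: ler_powR.
by rewrite ge0_ler_powR ?nnegrE ?f_ge0 ?(le_trans ler01 max1).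
Qed.

Lemma powRf_le_small (x eps : R) (k : nat) : 0 <= x -> x < eps ->
  f eps <= 1 -> f x `^ p k <= f eps `^ h.
Proof.
move=> x0 xeps fe1; have [hp _] := andP (p_bounds k).
have p0 : 0 <= p k by rewrite (le_trans _ hp) ?ltW.
have eps0 : 0 <= eps by rewrite (le_trans x0) ?ltW.
have fe0 : 0 <= f eps by exact: f_ge0.
apply: (@le_trans _ _ (f eps `^ p k)).
  apply: ge0_ler_powR; rewrite ?nnegrE ?f_ge0 //.
  exact: f_nondecreasing (ltW xeps).
have [->|fe_neq0] := eqVneq (f eps) 0; first by rewrite !powR0 ?gt_eqF ?(lt_le_trans h_gt0).
by rewrite ger_powR // lt_neqAle eq_sym fe_neq0 fe0.
Qed.

Lemma sum_powRf_le (s : seq nat) (d : nat -> R) (eps : R) :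
  (forall k, 0 <= d k) -> f eps <= 1 ->
  \sum_(k <- s) f (d k) `^ p k <=
    f eps `^ h * (size s)%:R + K * (count (fun k => eps <= d k) s)%:R.
Proof.
move=> d0 fe1; apply: sum_le_size_count => k.
have [_|dk] := leP eps (d k).
  by rewrite mulr1 (le_trans (powRf_le_max k (d0 k))) // lerDr powR_ge0.
by rewrite mulr0 addr0 powRf_le_small.
Qed.

End BoundedPowers.

Theorem theorem3p3 (R : realType) (f : R -> R) (beta : R) (m : nat)
  (th : nat -> nat) (p : nat -> R) :
  modulus f -> bounded_fun0 f ->
  0 < beta <= 1 ->
  lacunary (R := R) th ->
  (exists h H : R, 0 < h /\ forall k, h <= p k <= H) ->
  hr th r / hr th r `^ beta @[r --> \oo] --> (1 : R) ->
  forall X : nat -> R -> R, (forall k, fuzzy_number (X k)) ->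
    S_space beta th m X -> w_space beta th f p m X.
Proof.
move=> fmod [M f_le_M] _ _ [h [H [h0 p_bounds]]] ratio1 X _ [X0 [X0_fuzzy SX]].
exists X0; split=> //; apply: (cvg0_eps_squeeze ratio1) => e e0.
have [eps [eps0 fe1 fe_small]] := modulus_powR_small fmod h0 e0.
have [f_ge0 _ _ f_nondecreasing _] := fmod.
set K := Num.max 1 M `^ H.
set count_eps := fun r => (hr th r `^ beta)^-1 *
  (count (fun k => eps <= fdist (Delta m X k) X0) (Ir th r))%:R.
exists (fun r => K * count_eps r); split.
  by rewrite -(mulr0 K); apply: cvgM; [exact: cvg_cst | exact: SX].
apply: nearW => r; have q0 : 0 <= (hr th r `^ beta)^-1 by rewrite invr_ge0 powR_ge0.
rewrite mulr_ge0 ?sumr_ge0 // => [|k _]; last exact: powR_ge0.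
have := sum_powRf_le f_ge0 f_nondecreasing f_le_M h0 p_bounds
  (Ir th r) (fun k => fdist_ge0 (Delta m X k) X0) fe1.
rewrite size_Ir => le_sum; apply: le_trans (ler_wpM2l q0 le_sum) _.
rewrite mulrDr (mulrCA _ (f eps `^ h)) (mulrCA _ K) [_^-1 * hr th r]mulrC.
rewrite lerD2r ler_wpM2r //.
by rewrite divr_ge0 ?powR_ge0 // /hr ler0n.
Qed.
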